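(* In the standing setting, assume (MP). Let $\beta$ be the Bellman strategy. Then for every player strategy $s$: $\mathbb E_\beta[U]=\varphi^v(0,\sigma^v(0))\ge\mathbb E_s[U]$, and for every $t\in\{1,\dots,\overline R\}$ and every admissible history $h_t=(u_0,\delta_0,\dots,u_{t-1},\delta_{t-1})$, $$\mathbb E_\beta[U\mid h_t]=\varphi^v(t,u_{t-1},\delta_{t-1})\ge \mathbb E_s[U\mid h_t].$$
   Context: Standing setting. Integers $n\ge2$, $m\ge1$; $N:=(n-1)m$. Reals $p_{\mathrm{init}}\ge0$, $\Delta P>0$; the price at round $t\ge0$ is $p_t:=p_{\mathrm{init}}+t\Delta P$. The player's valuation $v:\{0,\dots,m\}\to[0,\infty)$ satisfies $v(0)=0$ and is non-decreasing and concave. $\overline R:=\lceil (v(1)-p_{\mathrm{init}})/\Delta P\rceil$, assumed $\ge1$. For $t\ge0$, $\sigma^v(t):=\min\operatorname{argmax}_{0\le u\le m}(v(u)-up_t)$. The opponent is given by random variables $Z_1\ge Z_2\ge\dots\ge Z_N\ge0$ (a.s.) on a probability space $(\Omega,\mathcal F,\mathbb P)$; its demand at price $p$ is $\delta(p):=\sum_{j=1}^N\mathbf 1\{Z_j>p\}$. For $t\ge1$ fix transition kernels $K_t(\delta'\mid\delta)$ ($\delta,\delta'\in\{0,\dots,N\}$), each $K_t(\cdot\mid\delta)$ a probability on $\{0,\dots,\delta\}$, with $K_t(\delta'\mid\delta)=\mathbb P(\delta(p_t)=\delta'\mid\delta(p_{t-1})=\delta)$ whenever $\mathbb P(\delta(p_{t-1})=\delta)>0$.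 Value function: for $t\in\{1,\dots,\overline R\}$, $k\in\{0,\dots,m\}$, $\delta\in\{0,\dots,N\}$: $\varphi^v(t,k,\delta):=v(k)-kp_{t-1}$ if $k+\delta\le m$; $:=\max_{0\le u\le k}\sum_{\delta'=0}^N K_t(\delta'\mid\delta)\varphi^v(t+1,u,\delta')$ if $k+\delta>m$ and $t<\overline R$; $:=0$ if $k+\delta>m$ and $t=\overline R$. Also $\varphi^v(0,k):=\max_{0\le u\le k}\sum_{\delta'}\mathbb P(\delta(p_0)=\delta')\varphi^v(1,u,\delta')$. Auction. A player strategy $s=(s_t)_{0\le t\le\overline R-1}$ assigns to each history $h_t=(u_0,\delta_0,\dots,u_{t-1},\delta_{t-1})$ a bid $u_t=s_t(h_t)\in\{0,\dots,u_{t-1}\}$, where $u_{-1}:=\sigma^v(0)$. Against the straightforward opponent, the opponent's round-$t$ demand is $\delta_t:=\delta(p_t)$. The auction ends at the first round $\tau\in\{0,\dots,\overline R-1\}$ with $u_\tau+\delta_\tau\le m$ and the player's utility is $U:=v(u_\tau)-u_\tau p_\tau$; if there is no such round, $U:=0$. A history $h_t$ ($t\ge1$) is admissible if $u_0\le\sigma^v(0)$, $u_r\le u_{r-1}$, $u_r+\delta_r>m$ for all $r\le t-2$, and $\mathbb P(\delta(p_r)=\delta_r\ \forall r\le t-1)>0$. $\mathbb E_s[U\mid h_t]$ denotes the conditional expectation of $U$ given $\{\delta(p_r)=\delta_r,\ r\le t-1\}$ when the player's bids at rounds $0,\dots,t-1$ are $u_0,\dots,u_{t-1}$ and at rounds $r\ge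 t$ are $s_r(h_r)$. Bellman strategy: $\beta^v(0,k):=\min\operatorname{argmax}_{0\le u\le k}\sum_{\delta'}\mathbb P(\delta(p_0)=\delta')\varphi^v(1,u,\delta')$, and for $t\in\{1,\dots,\overline R-1\}$, $\beta^v(t,k,\delta):=\min\operatorname{argmax}_{0\le u\le k}\sum_{\delta'}K_t(\delta'\mid\delta)\varphi^v(t+1,u,\delta')$. The Bellman strategy $\beta$ bids $u_0=\beta^v(0,\sigma^v(0))$ and $u_t=\beta^v(t,u_{t-1},\delta_{t-1})$ for $t\ge1$. Markov property (MP): $(\delta(p_t))_{0\le t\le\overline R}$ is a Markov chain. *)

From mathcomp Require Import all_boot all_order all_algebra.
From mathcomp Require Import all_classical all_reals all_analysis.


Import Order.TTheory GRing.Theory Num.Theory.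
Local Open Scope ring_scope.
Local Open Scope classical_set_scope.

Definition Nop (n m : nat) : nat := ((n - 1) * m)%N.

Definition price {R : realType} (pinit dP : R) (t : nat) : R :=
  pinit + t%:R * dP.

Definition Rbar {R : realType} (pinit dP : R) (v : nat -> R) : nat :=
  `|Num.ceil ((v 1%N - pinit) / dP)|%N.

Definition maxu {R : realType} (k : nat) (f : nat -> R) : R :=
  \big[Num.max/f 0%N]_(u < k.+1) f u.

Definition argminmax {R : realType} (k : nat) (f : nat -> R) : nat :=
  find (fun u => f u == maxu k f) (iota 0 k.+1).

Definition sigmav {R : realType} (m : nat) (pinit dP : R) (v : nat -> R)
  (t : nat) : nat :=
  argminmax m (fun u => v u - u%:R * price pinit dP t).

Definition valuation_ok {R : realType} (m : nat) (v : nat -> R) : Prop :=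
  [/\ v 0%N = 0,
      (forall k, (k <= m)%N -> 0 <= v k),
      (forall k, (k < m)%N -> v k <= v k.+1) &
      (forall k, (1 <= k)%N -> (k.+1 <= m)%N ->
          v k.+1 - v k <= v k - v k.-1)].

Definition demand {R : realType} {d : measure_display} {T : measurableType d}
  (n m : nat) (pinit dP : R) (Z : 'I_(Nop n m) -> T -> R) (t : nat) (w : T)
  : nat :=
  #|[pred j : 'I_(Nop n m) | price pinit dP t < Z j w]|.

Definition Pr {R : realType} {d : measure_display} {T : measurableType d}
  (P : probability T R) (A : set T) : R := fine (P A).

Definition Z_ordered {R : realType} {d : measure_display} {T : measurableType d}
  (P : probability T R) (N : nat) (Z : 'I_N -> T -> R) : Prop :=
  {ae P, forall w, (forall i j : 'I_N, (i <= j)%N -> Z j w <= Z i w) /\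
                   (forall j : 'I_N, 0 <= Z j w)}.

Definition kernel_ok {R : realType} (N : nat) (K : nat -> nat -> nat -> R)
  : Prop :=
  forall t dl, (1 <= t)%N -> (dl <= N)%N ->
    [/\ (forall dl', 0 <= K t dl dl'),
        (forall dl', (dl < dl')%N -> K t dl dl' = 0) &
        \sum_(dl' < dl.+1) K t dl dl' = 1].

Definition kernel_consistent {R : realType} {d : measure_display}
  {T : measurableType d} (P : probability T R) (n m : nat) (pinit dP : R)
  (Z : 'I_(Nop n m) -> T -> R) (K : nat -> nat -> nat -> R) : Prop :=
  forall t dl dl', (1 <= t)%N -> (dl <= Nop n m)%N -> (dl' <= Nop n m)%N ->
    0 < Pr P [set w | demand n m pinit dP Z t.-1 w = dl] ->
    K t dl dl' =
      Pr P [set w | demand n m pinit dP Z t w = dl' /\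
                    demand n m pinit dP Z t.-1 w = dl]
      / Pr P [set w | demand n m pinit dP Z t.-1 w = dl].

Definition markov_property {R : realType} {d : measure_display}
  {T : measurableType d} (P : probability T R) (n m : nat) (pinit dP : R)
  (Z : 'I_(Nop n m) -> T -> R) (Rb : nat) : Prop :=
  forall t (x : nat -> nat), (1 <= t)%N -> (t <= Rb)%N ->
    0 < Pr P [set w | forall r, (r < t)%N -> demand n m pinit dP Z r w = x r] ->
    Pr P [set w | forall r, (r <= t)%N -> demand n m pinit dP Z r w = x r]
      / Pr P [set w | forall r, (r < t)%N -> demand n m pinit dP Z r w = x r]
    = Pr P [set w | demand n m pinit dP Z t w = x t /\
                    demand n m pinit dP Z t.-1 w = x t.-1]
      / Pr P [set w | demand n m pinit dP Z t.-1 w = x t.-1].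

(* phi_rec r t k dl computes phi^v(t,k,dl) where r = Rbar - t. *)
Fixpoint phi_rec {R : realType} (m N : nat) (pinit dP : R) (v : nat -> R)
  (K : nat -> nat -> nat -> R) (r t k dl : nat) : R :=
  if (k + dl <= m)%N then v k - k%:R * price pinit dP t.-1
  else match r with
       | 0%N => 0
       | r'.+1 => maxu k (fun u =>
           \sum_(dl' < N.+1) K t dl dl' * phi_rec m N pinit dP v K r' t.+1 u dl')
       end.

Definition phi {R : realType} (m N : nat) (pinit dP : R) (v : nat -> R)
  (K : nat -> nat -> nat -> R) (t k dl : nat) : R :=
  phi_rec m N pinit dP v K (Rbar pinit dP v - t) t k dl.

Definition obj0 {R : realType} {d : measure_display} {T : measurableType d}
  (P : probability T R) (n m : nat) (pinit dP : R) (v : nat -> R)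
  (Z : 'I_(Nop n m) -> T -> R) (K : nat -> nat -> nat -> R) (u : nat) : R :=
  \sum_(dl' < (Nop n m).+1)
     Pr P [set w | demand n m pinit dP Z 0 w = dl'] *
     phi m (Nop n m) pinit dP v K 1 u dl'.

Definition phi0 {R : realType} {d : measure_display} {T : measurableType d}
  (P : probability T R) (n m : nat) (pinit dP : R) (v : nat -> R)
  (Z : 'I_(Nop n m) -> T -> R) (K : nat -> nat -> nat -> R) (k : nat) : R :=
  maxu k (obj0 P n m pinit dP v Z K).

Definition beta0 {R : realType} {d : measure_display} {T : measurableType d}
  (P : probability T R) (n m : nat) (pinit dP : R) (v : nat -> R)
  (Z : 'I_(Nop n m) -> T -> R) (K : nat -> nat -> nat -> R) (k : nat) : nat :=
  argminmax k (obj0 P n m pinit dP v Z K).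

Definition betat {R : realType} (m N : nat) (pinit dP : R) (v : nat -> R)
  (K : nat -> nat -> nat -> R) (t k dl : nat) : nat :=
  argminmax k (fun u =>
    \sum_(dl' < N.+1) K t dl dl' * phi m N pinit dP v K t.+1 u dl').

(* A history h_t = (u_0,delta_0,...,u_{t-1},delta_{t-1}) is the list of
   pairs (u_r, delta_r); its length is t. *)
Notation history := (seq (nat * nat)).

(* u_{t-1}, with u_{-1} := sigma^v(0) *)
Definition prevbid {R : realType} (m : nat) (pinit dP : R) (v : nat -> R)
  (h : history) : nat :=
  if h is [::] then sigmav m pinit dP v 0 else (last (0, 0)%N h).1.

Definition is_strategy {R : realType} (m : nat) (pinit dP : R) (v : nat -> R)
  (s : history -> nat) : Prop :=
  forall h : history, (size h < Rbar pinit dP v)%N ->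
    (s h <= prevbid m pinit dP v h)%N.

Definition bellman {R : realType} {d : measure_display} {T : measurableType d}
  (P : probability T R) (n m : nat) (pinit dP : R) (v : nat -> R)
  (Z : 'I_(Nop n m) -> T -> R) (K : nat -> nat -> nat -> R) (h : history)
  : nat :=
  match h with
  | [::] => beta0 P n m pinit dP v Z K (sigmav m pinit dP v 0)
  | _ :: _ => betat m (Nop n m) pinit dP v K (size h)
                (last (0, 0)%N h).1 (last (0, 0)%N h).2
  end.

Fixpoint run {R : realType} {d : measure_display} {T : measurableType d}
  (n m : nat) (pinit dP : R) (Z : 'I_(Nop n m) -> T -> R)
  (s : history -> nat) (h0 : history) (w : T) (k : nat) : history :=
  match k with
  | 0%N => h0
  | k'.+1 => let h := run n m pinit dP Z s h0 w k' in
             rcons h (s h, demand n m pinit dP Z (size h) w)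
  end.

(* Utility of a full history of rounds 0..Rbar-1: the auction ends at the
   first round tau with u_tau + delta_tau <= m, utility v(u_tau) - u_tau p_tau;
   0 if there is no such round. *)
Definition utility {R : realType} (m : nat) (pinit dP : R) (v : nat -> R)
  (H : history) : R :=
  let i := find (fun x : nat * nat => (x.1 + x.2 <= m)%N) H in
  if (i < size H)%N then
    let u := (nth (0, 0)%N H i).1 in v u - u%:R * price pinit dP i
  else 0.

(* U(w) when the bids of rounds < size h0 are those of h0 and the bids of
   the later rounds r < Rbar are s_r(h_r). *)
Definition payoff {R : realType} {d : measure_display} {T : measurableType d}
  (n m : nat) (pinit dP : R) (v : nat -> R) (Z : 'I_(Nop n m) -> T -> R)
  (s : history -> nat) (h0 : history) (w : T) : R :=
  utility m pinit dP v (run n m pinit dP Z s h0 w (Rbar pinit dP v - size h0)).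

Definition hev {R : realType} {d : measure_display} {T : measurableType d}
  (n m : nat) (pinit dP : R) (Z : 'I_(Nop n m) -> T -> R) (h : history)
  : set T :=
  [set w | forall r, (r < size h)%N -> demand n m pinit dP Z r w = (nth (0, 0)%N h r).2].

Definition ExpU {R : realType} {d : measure_display} {T : measurableType d}
  (P : probability T R) (n m : nat) (pinit dP : R) (v : nat -> R)
  (Z : 'I_(Nop n m) -> T -> R) (s : history -> nat) : R :=
  fine (\int[P]_w (payoff n m pinit dP v Z s [::] w)%:E).

Definition CondExpU {R : realType} {d : measure_display} {T : measurableType d}
  (P : probability T R) (n m : nat) (pinit dP : R) (v : nat -> R)
  (Z : 'I_(Nop n m) -> T -> R) (s : history -> nat) (h : history) : R :=
  fine (\int[P]_(w in hev n m pinit dP Z h) (payoff n m pinit dP v Z s h w)%:E)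
  / Pr P (hev n m pinit dP Z h).

Definition admissible {R : realType} {d : measure_display} {T : measurableType d}
  (P : probability T R) (n m : nat) (pinit dP : R) (v : nat -> R)
  (Z : 'I_(Nop n m) -> T -> R) (h : history) : Prop :=
  [/\ (1 <= size h)%N,
      ((nth (0, 0)%N h 0).1 <= sigmav m pinit dP v 0)%N,
      (forall r, (1 <= r)%N -> (r < size h)%N ->
         ((nth (0, 0)%N h r).1 <= (nth (0, 0)%N h r.-1).1)%N),
      (forall r, (r.+2 <= size h)%N ->
         (m < (nth (0, 0)%N h r).1 + (nth (0, 0)%N h r).2)%N) &
      0 < Pr P (hev n m pinit dP Z h)].

From mathcomp Require Import all_boot all_order all_algebra.
From mathcomp Require Import all_classical all_reals all_analysis.
Import Order.TTheory GRing.Theory Num.Theory.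
Local Open Scope ring_scope.

(* Backward induction on the number of remaining rounds.  Write E_s[U; h] for
   the integral of the payoff of s over the event of the history h.  Once h has
   settled, or the last round has been played, the payoff is constant and
   E_s[U; h] = P(h) phi.  Otherwise E_s[U; h] splits over the next demand x
   into the E_s[U; h (s h, x)], and (MP) with the consistency of K gives
   P(h (u, x)) = K(x | last demand of h) P(h).  By induction the sum is then at
   most P(h) times the objective maximised in phi, evaluated at the bid s h,
   hence at most P(h) phi; the Bellman bid is a maximiser, so it attains both
   bounds.  Round 0 is the same computation with the law of delta(p_0). *)

Section MaxuArgminmax.
Context {R : realType} {k : nat} (f : nat -> R).

Lemma maxu_ge {u} : (u <= k)%N -> f u <= maxu k f.
Proof.
by rewrite -ltnS => hu; exact: (le_bigmax (f 0%N) (fun i : 'I_k.+1 => f i) (Ordinal hu)).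
Qed.

Lemma maxu_attained : exists2 u, (u <= k)%N & f u = maxu k f.
Proof.
rewrite /maxu; apply: (big_ind (fun x => exists2 u, (u <= k)%N & f u = x)).
- by exists 0%N.
- move=> x y [u hu <-] [u' hu' <-].
  by case: (leP (f u) (f u')) => _; [exists u' | exists u].
- by move=> i _; exists i => //; rewrite -ltnS.
Qed.

Let has_argmax : has (fun u => f u == maxu k f) (iota 0 k.+1).
Proof.
have [u hu fu] := maxu_attained.
by apply/hasP; exists u; rewrite ?mem_iota ?add0n ?ltnS ?fu.
Qed.

Lemma argminmaxE : f (argminmax k f) = maxu k f.
Proof.
have := has_argmax; rewrite has_find size_iota => lt_find.
by have := nth_find 0%N has_argmax; rewrite /argminmax nth_iota // add0n => /eqP.
Qed.

End MaxuArgminmax.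

Lemma Rbar_gt0 {R : realType} {pinit dP : R} {v : nat -> R} :
  (1 <= Num.ceil ((v 1%N - pinit) / dP))%R -> (0 < Rbar pinit dP v)%N.
Proof. by rewrite /Rbar; case: (Num.ceil _). Qed.

Lemma subn_size_rcons_lt {A : Type} {b k : nat} (h : seq A) y :
  (size h < b)%N -> (b - size h < k.+1)%N -> (b - size (rcons h y) < k)%N.
Proof. by move=> h_lt; rewrite size_rcons subnS -ltnS prednK ?subn_gt0. Qed.

Section Pr.
Local Open Scope classical_set_scope.
Context {R : realType} {d : measure_display} {T : measurableType d}
  {P : probability T R}.

Lemma PrE {A} : measurable A -> P A = (Pr P A)%:E.
Proof. by move=> mA; rewrite /Pr fineK // fin_num_measure. Qed.

Lemma Pr_ge0 {A} : measurable A -> 0 <= Pr P A.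
Proof. by move=> mA; rewrite -lee_fin -PrE. Qed.

Lemma le_Pr {A B} : measurable A -> measurable B -> A `<=` B -> Pr P A <= Pr P B.
Proof. by move=> mA mB AB; rewrite -lee_fin -!PrE // le_measure // inE. Qed.

Lemma Pr_gt0_nonempty {A} : 0 < Pr P A -> exists w, A w.
Proof.
move=> A_gt0; apply: contrapT => nA.
suff A0 : A = set0 by rewrite A0 /Pr measure0 ltxx in A_gt0.
by apply/seteqP; split => // w hw; apply: nA; exists w.
Qed.

Lemma integral_cst_Pr {A} (c : R) : measurable A ->
  (\int[P]_(w in A) c%:E = (c * Pr P A)%:E)%E.
Proof. by move=> mA; rewrite integral_cst // /Pr EFinM fineK ?fin_num_measure. Qed.

End Pr.

Section Utility.
Variables (R : realType) (m : nat) (pinit dP : R) (v : nat -> R).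

Definition settles (x : nat * nat) : bool := (x.1 + x.2 <= m)%N.

Definition unsettled_prefix (h : history) : Prop :=
  forall r, (r.+2 <= size h)%N ->
    (m < (nth (0, 0)%N h r).1 + (nth (0, 0)%N h r).2)%N.

Lemma unsettled_prefix_rcons h y : (0 < size h)%N -> unsettled_prefix h ->
  ~~ settles (last (0, 0)%N h) -> unsettled_prefix (rcons h y).
Proof.
move=> h_gt0 hpre hL r; rewrite size_rcons ltnS => hr; rewrite nth_rcons hr.
move: hr; rewrite leq_eqVlt => /orP [/eqP hr | /hpre //].
by rewrite -[r]/(r.+1.-1) hr nth_last ltnNge.
Qed.

Lemma find_settles h : (0 < size h)%N -> unsettled_prefix h ->
  find settles h = if settles (last (0, 0)%N h) then (size h).-1 else size h.
Proof.
case/lastP: h => [//|h x] _ hpre.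
have hn : ~~ has settles h.
  apply/hasPn => y /(nthP (0, 0)%N) [r rlt <-]; rewrite /settles -ltnNge.
  by have := hpre r; rewrite size_rcons nth_rcons rlt; apply; rewrite ltnS.
rewrite -cats1 find_cat (negbTE hn) last_cat size_cat /= addn1.
by case: (settles x); rewrite ?addn0 ?addn1.
Qed.

Lemma utility_settled h r : (0 < size h)%N -> unsettled_prefix h ->
  settles (last (0, 0)%N h) ->
  utility m pinit dP v (h ++ r) =
  v (last (0, 0)%N h).1 - (last (0, 0)%N h).1%:R * price pinit dP (size h).-1.
Proof.
move=> h_gt0 hpre hL; rewrite /utility find_cat.
have -> : has settles h.
  apply/hasP; exists (last (0, 0)%N h) => //.
  by case: h h_gt0 {hpre hL} => // a l _ /=; exact: mem_last.
rewrite (find_settles _ h_gt0 hpre) hL size_cat nth_cat prednK //.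
by rewrite leqnn (leq_trans (leqnn _) (leq_addr _ _)) -(prednK h_gt0) nth_last.
Qed.

Lemma utility_unsettled h : (0 < size h)%N -> unsettled_prefix h ->
  ~~ settles (last (0, 0)%N h) -> utility m pinit dP v h = 0.
Proof.
by move=> h_gt0 hpre hL; rewrite /utility (find_settles _ h_gt0 hpre) (negbTE hL) ltnn.
Qed.

End Utility.

Section ValueFunction.
Variables (R : realType) (m N : nat) (pinit dP : R) (v : nat -> R)
  (K : nat -> nat -> nat -> R).

Local Notation phiv := (phi m N pinit dP v K).
Local Notation Rb := (Rbar pinit dP v).

Lemma phi_settled t k dl : (k + dl <= m)%N ->
  phiv t k dl = v k - k%:R * price pinit dP t.-1.
Proof. by move=> settled; rewrite /phi; case: (Rb - t)%N => [|r] /=; rewrite settled. Qed.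

Lemma phi_expired t k dl : ~~ (k + dl <= m)%N -> (Rb <= t)%N -> phiv t k dl = 0.
Proof.
by move=> unsettled; rewrite -subn_eq0 /phi => /eqP ->; rewrite /= (negbTE unsettled).
Qed.

Lemma phi_next t k dl : ~~ (k + dl <= m)%N -> (t < Rb)%N ->
  phiv t k dl = maxu k (fun u => \sum_(dl' < N.+1) K t dl dl' * phiv t.+1 u dl').
Proof. by move=> unsettled t_lt; rewrite /phi -subnSK //= (negbTE unsettled). Qed.

End ValueFunction.

Section Auction.
Local Open Scope classical_set_scope.
Context {R : realType} {d : measure_display} {T : measurableType d}
  {P : probability T R} {n m : nat} {pinit dP : R} {v : nat -> R}
  {Z : 'I_(Nop n m) -> T -> R} {K : nat -> nat -> nat -> R}.

Local Notation D := (demand n m pinit dP Z).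
Local Notation N := (Nop n m).
Local Notation Rb := (Rbar pinit dP v).
Local Notation run := (run n m pinit dP Z).
Local Notation payoff := (payoff n m pinit dP v Z).
Local Notation hev := (hev n m pinit dP Z).
Local Notation L h := (last (0, 0)%N h).
Local Notation phiv := (phi m N pinit dP v K).
Local Notation beta := (bellman P n m pinit dP v Z K).

Lemma demand_le t w : (D t w <= N)%N.
Proof. by rewrite /demand (leq_trans (max_card _)) // card_ord. Qed.

Lemma run_next s h w k : run s h w k.+1 = run s (rcons h (s h, D (size h) w)) w k.
Proof.
by elim: k => // k IH; exact: (congr1 (fun h' => rcons h' (s h', D (size h') w)) IH).
Qed.

Lemma run_prefix s h w k : exists r, run s h w k = h ++ r.
Proof.
elim: k => [|k [r IH]]; first by exists [::]; rewrite cats0.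
by exists (rcons r (s (h ++ r), D (size (h ++ r)) w)); rewrite /= IH rcons_cat.
Qed.

Lemma payoff_next s h w : (size h < Rb)%N ->
  payoff s h w = payoff s (rcons h (s h, D (size h) w)) w.
Proof. by move=> h_lt; rewrite /payoff size_rcons -run_next subnSK. Qed.

Lemma payoff_expired s h : (Rb <= size h)%N ->
  payoff s h = cst (utility m pinit dP v h).
Proof. by rewrite -subn_eq0 => /eqP h_ge; apply/funext => w; rewrite /payoff h_ge. Qed.

Lemma payoff_settled s h : (0 < size h)%N -> unsettled_prefix m h ->
  settles m (L h) ->
  payoff s h = cst (v (L h).1 - (L h).1%:R * price pinit dP (size h).-1).
Proof.
move=> h_gt0 hpre hL; apply/funext => w; rewrite /payoff.
by have [r ->] := run_prefix s h w (Rb - size h); exact: utility_settled.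
Qed.

Lemma hev_nil : hev [::] = [set: T].
Proof. by apply/seteqP; split => w //= _ r. Qed.

Lemma hev_rcons h u x : hev (rcons h (u, x)) = hev h `&` [set w | D (size h) w = x].
Proof.
apply/seteqP; split => w /=.
  move=> hw; split.
    by move=> r r_lt; have := hw r; rewrite size_rcons nth_rcons r_lt; apply; exact: ltnW.
  by have := hw (size h); rewrite size_rcons nth_rcons ltnn eqxx; apply.
move=> [hw hx] r; rewrite size_rcons ltnS leq_eqVlt nth_rcons.
by case/orP => [/eqP -> | r_lt]; [rewrite ltnn eqxx | rewrite r_lt; exact: hw].
Qed.

Lemma payoff_decompose s h : (size h < Rb)%N ->
  payoff s h = fun w => \sum_(x < N.+1)
    (\1_[set w | D (size h) w = x] w : R) * payoff s (rcons h (s h, val x)) w.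
Proof.
move=> h_lt; apply/funext => w; rewrite payoff_next //.
rewrite (bigD1 (Ordinal (demand_le (size h) w : (D (size h) w < N.+1)%N))) //=.
rewrite indicE mem_set // mul1r big1 ?addr0 // => x /eqP x_neq.
by rewrite indicE memNset ?mul0r //= => hx; apply: x_neq; apply/val_inj.
Qed.

Hypothesis measurable_Z : forall j, measurable_fun [set: T] (Z j).

Lemma measurable_demand_eq t x : measurable [set w | D t w = x].
Proof.
pose A j := [set w | price pinit dP t < Z j w].
have mA j : measurable (A j).
  have := measurable_Z j measurableT _ (measurable_itv `]price pinit dP t, +oo[%O).
  rewrite setTI; congr (measurable _).
  by apply/seteqP; split => w /=; rewrite in_itv /= andbT.
pose g w := \sum_(j : 'I_N) (\1_(A j) w : R).
have mg : measurable_fun [set: T] g.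
  by apply: measurable_sum => j; exact: measurable_realfun.measurable_indic.
have gE w : g w = (D t w)%:R.
  rewrite /g /demand -sum1_card natr_sum big_mkcond [RHS]big_mkcond /=.
  apply: eq_bigr => j _; rewrite indicE inE /= /A.
  by case: ifP => H; [rewrite mem_set | rewrite memNset //= H].
have := mg measurableT _ (measurable_set1 (x%:R : R)).
rewrite setTI; congr (measurable _); apply/seteqP; split => w /=.
  by rewrite gE => /eqP; rewrite eqr_nat => /eqP.
by rewrite gE => ->.
Qed.

Lemma measurable_hev h : measurable (hev h).
Proof.
elim/last_ind: h => [|h [u x] IH]; first by rewrite hev_nil.
by rewrite hev_rcons; apply: measurableI => //; exact: measurable_demand_eq.
Qed.

Lemma measurable_payoff s h : measurable_fun [set: T] (payoff s h).
Proof.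
have [k] := ubnP (Rb - size h); elim: k h => // k IH h hk.
have [h_ge|h_lt] := leqP Rb (size h); first by rewrite payoff_expired.
rewrite payoff_decompose //; apply: measurable_sum => x.
apply: measurable_realfun.measurable_funM.
  exact/measurable_realfun.measurable_indic/measurable_demand_eq.
by apply: IH; exact: subn_size_rcons_lt.
Qed.

Lemma integral_payoff_next s h : (size h < Rb)%N ->
  (\int[P]_(w in hev h) (payoff s h w)%:E =
   \sum_(x < N.+1) \int[P]_(w in hev (rcons h (s h, val x)))
     (payoff s (rcons h (s h, val x)) w)%:E)%E.
Proof.
move=> h_lt.
have hevE : hev h = \big[setU/set0]_(x <- iota 0 N.+1) hev (rcons h (s h, x)).
  rewrite -bigcup_seq; apply/seteqP; split => w.
    move=> hw; exists (D (size h) w); last by rewrite hev_rcons.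
    by change (D (size h) w \in iota 0 N.+1); rewrite mem_iota add0n ltnS demand_le.
  by move=> [x _]; rewrite hev_rcons => -[].
rewrite hevE integral_bigsetU_EFin //.
- rewrite -(big_mkord xpredT (fun x => \int[P]_(w in hev (rcons h (s h, x)))
        (payoff s (rcons h (s h, x)) w)%:E)%E) /index_iota subn0.
  apply: eq_bigr => x _; apply: eq_integral => w; rewrite inE hev_rcons => -[_ hw].
  by rewrite payoff_next // hw.
- by move=> x; exact: measurable_hev.
- exact: iota_uniq.
- apply/trivIsetP => x y _ _ xy; apply/seteqP; split => // w.
  by rewrite !hev_rcons => -[[_ hx] [_ hy]]; move/eqP: xy; apply; rewrite -hx -hy.
- exact/measurable_realfun.measurable_EFinP/measurable_funTS/measurable_payoff.
Qed.

Definition ExpU_on s h : R := fine (\int[P]_(w in hev h) (payoff s h w)%:E).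

Lemma integral_payoffE s h :
  (\int[P]_(w in hev h) (payoff s h w)%:E)%E = (ExpU_on s h)%:E.
Proof.
have [k] := ubnP (Rb - size h); elim: k h => // k IH h hk.
have [h_ge|h_lt] := leqP Rb (size h).
  by rewrite /ExpU_on payoff_expired // integral_cst_Pr //; exact: measurable_hev.
rewrite /ExpU_on integral_payoff_next //.
rewrite (eq_bigr (fun x => (ExpU_on s (rcons h (s h, val x)))%:E)) ?sumEFin // => x _.
by apply: IH; exact: subn_size_rcons_lt.
Qed.

Lemma ExpU_on_next s h : (size h < Rb)%N ->
  ExpU_on s h = \sum_(x < N.+1) ExpU_on s (rcons h (s h, val x)).
Proof.
move=> h_lt; rewrite {1}/ExpU_on integral_payoff_next //.
by under eq_bigr do rewrite integral_payoffE; rewrite sumEFin.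
Qed.

Lemma ExpU_on_cst s h c : payoff s h = cst c -> ExpU_on s h = c * Pr P (hev h).
Proof. by move=> pc; rewrite /ExpU_on pc integral_cst_Pr //; exact: measurable_hev. Qed.

Lemma strategy_le_last s h : is_strategy m pinit dP v s ->
  (0 < size h)%N -> (size h < Rb)%N -> (s h <= (L h).1)%N.
Proof. by move=> s_strat; case: h => // a l _; exact: s_strat. Qed.

Lemma ExpU_on_terminal s h : (0 < size h)%N -> unsettled_prefix m h ->
  settles m (L h) || (Rb <= size h)%N ->
  ExpU_on s h = Pr P (hev h) * phiv (size h) (L h).1 (L h).2.
Proof.
move=> h_gt0 hpre; have [hL _ | hL /= h_ge] := boolP (settles m (L h)).
  have /ExpU_on_cst -> := payoff_settled s h h_gt0 hpre hL.
  by rewrite phi_settled // mulrC.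
have /ExpU_on_cst -> := payoff_expired s h h_ge.
by rewrite utility_unsettled // phi_expired // mul0r mulr0.
Qed.

Hypothesis K_consistent : kernel_consistent P n m pinit dP Z K.
Hypothesis demand_markov : markov_property P n m pinit dP Z Rb.

Lemma Pr_hev_rcons h u x : (0 < size h)%N -> (size h <= Rb)%N -> (x <= N)%N ->
  0 < Pr P (hev h) ->
  Pr P (hev (rcons h (u, x))) = K (size h) (L h).2 x * Pr P (hev h).
Proof.
move=> h_gt0 h_le x_le h_pos.
pose xs r := (nth (0, 0)%N (rcons h (u, x)) r).2.
have hevE : [set w | forall r, (r < size h)%N -> D r w = xs r] = hev h.
  by apply/seteqP; split => w /= hw r r_lt; have := hw r r_lt; rewrite /xs nth_rcons r_lt.
have hevSE : [set w | forall r, (r <= size h)%N -> D r w = xs r] = hev (rcons h (u, x)).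
  apply/seteqP; split => w /= hw r; first by rewrite size_rcons ltnS; apply: hw.
  by rewrite -ltnS -(size_rcons h (u, x)); apply: hw.
have xs_last : xs (size h) = x by rewrite /xs nth_rcons ltnn eqxx.
have xs_prev : xs (size h).-1 = (L h).2 by rewrite /xs nth_rcons prednK // leqnn nth_last.
have := demand_markov (size h) xs h_gt0 h_le.
rewrite hevE hevSE xs_last xs_prev => /(_ h_pos) markov.
have [w hw] := Pr_gt0_nonempty h_pos.
have prev_le : ((L h).2 <= N)%N.
  by rewrite -nth_last -hw ?demand_le // ltn_predL.
have prev_pos : 0 < Pr P [set w | D (size h).-1 w = (L h).2].
  apply: (lt_le_trans h_pos).
  apply: le_Pr; [exact: measurable_hev | exact: measurable_demand_eq |].
  by move=> w' hw'; rewrite /= -nth_last; apply: hw'; rewrite prednK.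
by rewrite (K_consistent _ _ _ h_gt0 prev_le x_le prev_pos) -markov divfK // gt_eqF.
Qed.

(* Also holds when P(h) = 0, since then every P(h (u, x)) vanishes. *)
Lemma sum_Pr_hev_rcons h u (g : nat -> R) : (0 < size h)%N -> (size h <= Rb)%N ->
  \sum_(x < N.+1) Pr P (hev (rcons h (u, val x))) * g x =
  Pr P (hev h) * \sum_(x < N.+1) K (size h) (L h).2 x * g x.
Proof.
move=> h_gt0 h_le; have := Pr_ge0 (P := P) (measurable_hev h).
rewrite le0r => /orP [/eqP h0 | h_pos].
  rewrite h0 mul0r big1 // => x _.
  suff -> : Pr P (hev (rcons h (u, val x))) = 0 by rewrite mul0r.
  apply/le_anti; rewrite (Pr_ge0 (measurable_hev _)) andbT -h0.
  apply: le_Pr; [exact: measurable_hev.. | rewrite hev_rcons; exact: subIsetl].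
rewrite mulr_sumr; apply: eq_bigr => x _.
have x_le : (x <= N)%N by rewrite -ltnS.
by rewrite Pr_hev_rcons // mulrA (mulrC (Pr P _)).
Qed.

Lemma ExpU_on_le_phi s h : is_strategy m pinit dP v s ->
  (0 < size h)%N -> (size h <= Rb)%N -> unsettled_prefix m h ->
  ExpU_on s h <= Pr P (hev h) * phiv (size h) (L h).1 (L h).2.
Proof.
move=> s_strat; have [k] := ubnP (Rb - size h).
elim: k h => // k IH h hk h_gt0 h_le hpre.
have [h_term|] := boolP (settles m (L h) || (Rb <= size h)%N).
  by rewrite ExpU_on_terminal.
rewrite negb_or -ltnNge => /andP [hL h_lt].
rewrite ExpU_on_next // phi_next //.
apply: (@le_trans _ _
  (\sum_(x < N.+1) Pr P (hev (rcons h (s h, val x))) * phiv (size h).+1 (s h) x)).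
  apply: ler_sum => x _; have := IH _ (subn_size_rcons_lt h (s h, val x) h_lt hk).
  by rewrite size_rcons last_rcons; apply => //; exact: unsettled_prefix_rcons.
rewrite sum_Pr_hev_rcons // ?ltnW //.
by rewrite ler_wpM2l ?(Pr_ge0 (measurable_hev _)) // maxu_ge // strategy_le_last.
Qed.

Lemma ExpU_on_bellman h : (0 < size h)%N -> (size h <= Rb)%N -> unsettled_prefix m h ->
  ExpU_on beta h = Pr P (hev h) * phiv (size h) (L h).1 (L h).2.
Proof.
have [k] := ubnP (Rb - size h); elim: k h => // k IH h hk h_gt0 h_le hpre.
have [h_term|] := boolP (settles m (L h) || (Rb <= size h)%N).
  by rewrite ExpU_on_terminal.
rewrite negb_or -ltnNge => /andP [hL h_lt].
rewrite ExpU_on_next // phi_next //.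
transitivity
  (\sum_(x < N.+1) Pr P (hev (rcons h (beta h, val x))) * phiv (size h).+1 (beta h) x).
  apply: eq_bigr => x _; have := IH _ (subn_size_rcons_lt h (beta h, val x) h_lt hk).
  by rewrite size_rcons last_rcons; apply => //; exact: unsettled_prefix_rcons.
rewrite sum_Pr_hev_rcons // ?ltnW //; congr (_ * _).
by case: h h_gt0 {hk h_le hpre hL h_lt} => // a l _; exact: argminmaxE.
Qed.

Lemma CondExpU_le_phi s h : is_strategy m pinit dP v s ->
  (0 < size h)%N -> (size h <= Rb)%N -> unsettled_prefix m h -> 0 < Pr P (hev h) ->
  CondExpU P n m pinit dP v Z s h <= phiv (size h) (L h).1 (L h).2.
Proof.
move=> s_strat h_gt0 h_le hpre h_pos.
by rewrite /CondExpU -/(ExpU_on s h) ler_pdivrMr // mulrC ExpU_on_le_phi.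
Qed.

Lemma CondExpU_bellman h :
  (0 < size h)%N -> (size h <= Rb)%N -> unsettled_prefix m h -> 0 < Pr P (hev h) ->
  CondExpU P n m pinit dP v Z beta h = phiv (size h) (L h).1 (L h).2.
Proof.
move=> h_gt0 h_le hpre h_pos.
by rewrite /CondExpU -/(ExpU_on beta h) ExpU_on_bellman // mulrC mulKf // gt_eqF.
Qed.

Lemma hev_single u x : hev [:: (u, x)] = [set w | D 0 w = x].
Proof. by rewrite -[[:: _]]/(rcons [::] (u, x)) hev_rcons hev_nil setTI. Qed.

Lemma ExpU_next s : (0 < Rb)%N ->
  ExpU P n m pinit dP v Z s = \sum_(x < N.+1) ExpU_on s [:: (s [::], val x)].
Proof. by move=> Rb_gt0; rewrite /ExpU -hev_nil -/(ExpU_on s [::]) ExpU_on_next. Qed.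

Lemma ExpU_le_phi0 s : (0 < Rb)%N -> is_strategy m pinit dP v s ->
  ExpU P n m pinit dP v Z s <= phi0 P n m pinit dP v Z K (sigmav m pinit dP v 0).
Proof.
move=> Rb_gt0 s_strat; rewrite ExpU_next //.
apply: le_trans (maxu_ge _ (s_strat [::] Rb_gt0)); apply: ler_sum => x _.
by have := ExpU_on_le_phi s [:: (s [::], val x)] s_strat; rewrite hev_single; apply.
Qed.

Lemma ExpU_bellman : (0 < Rb)%N ->
  ExpU P n m pinit dP v Z beta = phi0 P n m pinit dP v Z K (sigmav m pinit dP v 0).
Proof.
move=> Rb_gt0; rewrite ExpU_next // /phi0 -argminmaxE; apply: eq_bigr => x _.
by have := ExpU_on_bellman [:: (beta [::], val x)]; rewrite hev_single; apply.
Qed.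

End Auction.

Theorem mainTheorem7 (R : realType) (d : measure_display) (T : measurableType d)
  (P : probability T R) (n m : nat) (pinit dP : R) (v : nat -> R)
  (Z : 'I_(Nop n m) -> T -> R) (K : nat -> nat -> nat -> R) :
  (2 <= n)%N -> (1 <= m)%N -> 0 <= pinit -> 0 < dP ->
  valuation_ok m v ->
  (1 <= Num.ceil ((v 1%N - pinit) / dP))%R ->
  (forall j, measurable_fun [set: T] (Z j)) ->
  Z_ordered P (Nop n m) Z ->
  kernel_ok (Nop n m) K ->
  kernel_consistent P n m pinit dP Z K ->
  markov_property P n m pinit dP Z (Rbar pinit dP v) ->
  let beta := bellman P n m pinit dP v Z K in
  (ExpU P n m pinit dP v Z beta = phi0 P n m pinit dP v Z K (sigmav m pinit dP v 0)
   /\ forall s, is_strategy m pinit dP v s ->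
        ExpU P n m pinit dP v Z s <= phi0 P n m pinit dP v Z K (sigmav m pinit dP v 0))
  /\
  (forall h : seq (nat * nat),
     (1 <= size h <= Rbar pinit dP v)%N ->
     admissible P n m pinit dP v Z h ->
     let ulast := (last (0, 0)%N h).1 in
     let dlast := (last (0, 0)%N h).2 in
     CondExpU P n m pinit dP v Z beta h = phi m (Nop n m) pinit dP v K (size h) ulast dlast
     /\ forall s, is_strategy m pinit dP v s ->
          CondExpU P n m pinit dP v Z s h <= phi m (Nop n m) pinit dP v K (size h) ulast dlast).
Proof.
move=> _ _ _ _ _ ceil_ge1 mZ _ _ K_cons markov beta.
have Rb_gt0 := Rbar_gt0 ceil_ge1.
split; first by split=> [|s]; [exact: ExpU_bellman | exact: ExpU_le_phi0].
move=> h /andP [h_gt0 h_le] [_ _ _ hpre h_pos]; split=> [|s s_strat].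
  exact: CondExpU_bellman.
exact: CondExpU_le_phi.
Qed.
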